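(* Let $\mathcal X\subseteq\{0,1\}^n$, $\pmb x\in\mathcal X$, $\hat{\pmb c},\pmb d\in\mathbb R^n_{\ge0}$ and integers $\Gamma,\Gamma'\ge0$ be fixed. Then the adversarial problem \[\max_{\pmb\delta\in\Delta(\Gamma),\,\pmb y\in\mathcal X}\ \min_{\pmb\epsilon\in\Delta(\Gamma')}\ \sum_{i\in[n]}(\hat c_i+d_i\delta_i+d_i\epsilon_i)(x_i-y_i)\] has an optimal solution $(\pmb\delta,\pmb y)$ with $y_i+\delta_i\le1$ for all $i\in[n]$.
   Context: $[n]=\{1,\dots,n\}$; for an integer $k\ge0$, $\Delta(k)=\{\pmb\delta\in\{0,1\}^n:\sum_i\delta_i\le k\}$. $\mathcal X$ is a nonempty set of feasible solutions of a combinatorial optimization problem. *)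

From mathcomp Require Import all_boot all_order all_algebra.
Set Implicit Arguments. Unset Strict Implicit. Unset Printing Implicit Defensive.
Import Order.TTheory GRing.Theory Num.Theory.
Local Open Scope ring_scope.

(* 0/1 vectors of length n are represented as {ffun 'I_n -> bool};
   the real value of a coordinate b is (b : nat)%:R. *)
Notation bvec n := {ffun 'I_n -> bool}.

Definition Delta (n k : nat) : {set bvec n} :=
  [set d : bvec n | (\sum_(i < n) (d i : nat) <= k)%N].

Definition adv_obj (R : realFieldType) (n : nat) (c d : 'I_n -> R)
    (x y delta eps : bvec n) : R :=
  \sum_(i < n) (c i + d i * (delta i : nat)%:R + d i * (eps i : nat)%:R)
                * ((x i : nat)%:R - (y i : nat)%:R).

(* inner value  min_{eps in Delta(Gamma')} adv_obj ... ; the minimum is over a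
   finite nonempty set (the zero vector lies in Delta(Gamma')), and the
   seed value is the objective at eps = 0, which belongs to the set. *)
Definition adv_inner (R : realFieldType) (n : nat) (c d : 'I_n -> R)
    (G' : nat) (x y delta : bvec n) : R :=
  \big[Order.min/adv_obj c d x y delta [ffun=> false]]_(e in Delta n G')
     adv_obj c d x y delta e.

Definition adv_optimal (R : realFieldType) (n : nat) (X : {set bvec n})
    (c d : 'I_n -> R) (G G' : nat) (x delta y : bvec n) : Prop :=
  [/\ delta \in Delta n G, y \in X &
      forall delta' y', delta' \in Delta n G -> y' \in X ->
        adv_inner c d G' x y' delta' <= adv_inner c d G' x y delta].

From mathcomp Require Import all_boot all_order all_algebra.
From mathcomp Require Import lra.
Set Implicit Arguments. Unset Strict Implicit. Unset Printing Implicit Defensive.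
Import Order.TTheory GRing.Theory Num.Theory.
Local Open Scope ring_scope.

(* The feasible set is finite, so an optimal (delta, y) exists. Where y_i = 1
   we have x_i - y_i <= 0, so the deviation d_i delta_i on coordinate i can
   only lower the objective for every eps; dropping it from delta keeps
   (delta, y) feasible and optimal. *)

Lemma le_bigmin2_id (disp : Order.disp_t) (T : orderType disp) (I : Type)
    (r : seq I) (P : pred I) (x1 x2 : T) (F1 F2 : I -> T) :
  (x1 <= x2)%O -> (forall i, P i -> (F1 i <= F2 i)%O) ->
  (\big[Order.min/x1]_(i <- r | P i) F1 i <=
   \big[Order.min/x2]_(i <- r | P i) F2 i)%O.
Proof. by move=> le_x le_F; elim/big_ind2: _ => // *; apply: le_min2. Qed.

Section Uncovered.

Variable n : nat.

Definition uncovered (y delta : bvec n) : bvec n := [ffun i => delta i && ~~ y i].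

Lemma uncovered_disjoint (y delta : bvec n) i :
  ((y i : nat) + (uncovered y delta i : nat) <= 1)%N.
Proof. by rewrite ffunE; case: (y i); case: (delta i). Qed.

Lemma uncovered_in_Delta (G : nat) (y delta : bvec n) :
  delta \in Delta n G -> uncovered y delta \in Delta n G.
Proof.
rewrite !inE; apply: leq_trans; apply: leq_sum => i _.
by rewrite ffunE; case: (delta i); case: (y i).
Qed.

Variables (R : realFieldType) (c d : 'I_n -> R).
Hypothesis d_ge0 : forall i, 0 <= d i.

Lemma adv_obj_uncovered (x y delta eps : bvec n) :
  adv_obj c d x y delta eps <= adv_obj c d x y (uncovered y delta) eps.
Proof.
apply: ler_sum => i _; rewrite ffunE; have := d_ge0 i.
by case: (x i); case: (y i); case: (delta i); case: (eps i) => /=;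
  rewrite ?mulr0 ?mulr1 ?addr0 ?subr0 ?subrr; lra.
Qed.

Lemma adv_inner_uncovered (G' : nat) (x y delta : bvec n) :
  adv_inner c d G' x y delta <= adv_inner c d G' x y (uncovered y delta).
Proof. by apply: le_bigmin2_id => *; apply: adv_obj_uncovered. Qed.

End Uncovered.

Lemma adv_optimal_exists (R : realFieldType) (n : nat) (X : {set bvec n})
    (c d : 'I_n -> R) (G G' : nat) (x : bvec n) :
  x \in X -> exists delta y, adv_optimal X c d G G' x delta y.
Proof.
move=> xX.
pose feasible := [pred p : bvec n * bvec n | (p.1 \in Delta n G) && (p.2 \in X)].
have feasible0 : feasible ([ffun=> false], x).
  by rewrite /= xX andbT inE big1 // => i _; rewrite ffunE.
case: (arg_maxP (fun p => adv_inner c d G' x p.2 p.1) feasible0).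
move=> [delta y] /andP[/= deltaG yX] max_dy.
by exists delta, y; split=> // delta' y' *; apply: (max_dy (delta', y')); apply/andP.
Qed.

Theorem lemma2 (R : realFieldType) (n : nat) (X : {set bvec n})
    (x : bvec n) (c d : 'I_n -> R) (G G' : nat) :
  x \in X ->
  (forall i, 0 <= c i) -> (forall i, 0 <= d i) ->
  exists delta y : bvec n,
    adv_optimal X c d G G' x delta y /\
    (forall i : 'I_n, ((y i : nat) + (delta i : nat) <= 1)%N).
Proof.
move=> xX _ d_ge0.
have [delta [y [deltaG yX max_dy]]] := @adv_optimal_exists R n X c d G G' x xX.
exists (uncovered y delta), y; split; last exact: uncovered_disjoint.
split=> // [|delta' y' delta'G y'X]; first exact: uncovered_in_Delta.
apply: le_trans (max_dy _ _ delta'G y'X) _; exact: adv_inner_uncovered.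
Qed.
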